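(* Let $(G,\rho)$ be a reversible random network and let $\zeta>0$. Suppose that for every $\delta>0$, almost surely, for all sufficiently large $R$, \[ \max\{\mathsf R^G_{\mathrm{eff}}(\rho\leftrightarrow x):x\in B^G(\rho,R)\}\le R^{\zeta+\delta} \quad\text{and}\quad \mathsf R^G_{\mathrm{eff}}(\rho\leftrightarrow\bar B^G(\rho,R))\ge R^{\zeta-\delta}. \] Then $\tilde\zeta=\tilde\zeta_0=\zeta$.
   Context: A random rooted network $(G,\rho,c^G,\xi)$: random locally finite connected graph $G$ (self-loops allowed), root $\rho$, conductances $c^G:E(G)\to[0,\infty)$, marking $\xi$. $c^G_u=\sum_{v:\{u,v\}\in E(G)}c^G(\{u,v\})$; random walk $X_0=\rho$, $\Pr[X_{n+1}=v\mid X_n=u]=c^G(\{u,v\})/c^G_u$. Reversible: a.s. $c^G_\rho>0$ and $(G,X_0,X_1,c^G,\xi)\overset d=(G,X_1,X_0,c^G,\xi)$. $d^G$ graph distance, $B^G(x,R)=\{y:d^G(x,y)\le R\}$, $\bar B^G(x,R)=V(G)\setminus B^G(x,R)$, $\mathsf R^G_{\mathrm{eff}}$ effective resistance in the network $(G,c^G)$. $\tilde\zeta$ is the supremum of the values $\zeta'$ such that for every $\delta>0$, a.s. for all but finitely many $R\in\mathbb N$, $\mathsf R^G_{\mathrm{eff}}(B^G(\rho,R^{1-\delta})\leftrightarrow\bar B^G(\rho,R))\ge R^{\zeta'-\delta}$; $\tilde\zeta_0$ is the infimum of the values $\zeta'$ such that for every $\delta>0$, a.s. for all but finitely many $R\in\mathbb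 N$, $\mathsf R^G_{\mathrm{eff}}(\rho\leftrightarrow\bar B^G(\rho,R))\le R^{\zeta'+\delta}$. *)

From HB Require Import structures.
From mathcomp Require Import all_boot all_order all_algebra.
From mathcomp Require Import all_classical all_reals all_analysis measurable_realfun.
Set Implicit Arguments. Unset Strict Implicit. Unset Printing Implicit Defensive.
Import Order.TTheory GRing.Theory Num.Theory.
Import numFieldNormedType.Exports.
Local Open Scope classical_set_scope.
Local Open Scope ring_scope.

(* A (labelled) network on the vertex set nat (an infinite connected locally
   finite graph is countably infinite, so its vertices can be labelled by nat).
   nadj : edge relation (self-loops allowed), ncond : conductances,
   nmarkv / nmarke : vertex / (oriented) edge marks. *)
Record net (R : realType) (Xi : Type) := Net {
  nadj : nat -> nat -> bool;
  ncond : nat -> nat -> R;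
  nmarkv : nat -> Xi;
  nmarke : nat -> nat -> Xi }.

Section Networks.
Context {R : realType} {Xi : Type}.
Implicit Types N : net R Xi.

Fixpoint walkn N (n : nat) (x y : nat) : Prop :=
  match n with
  | 0 => x = y
  | n'.+1 => exists z, walkn N n' x z /\ nadj N z y
  end.

Definition is_network N : Prop :=
  (forall u v, nadj N u v = nadj N v u) /\
  (forall u v, ncond N u v = ncond N v u) /\
  (forall u v, 0 <= ncond N u v) /\
  (forall u v, ~~ nadj N u v -> ncond N u v = 0) /\
  (forall u, finite_set [set v | nadj N u v]) /\
  (forall u v, exists n, walkn N n u v).

Definition gball N (x : nat) (r : R) : set nat :=
  [set y | exists n : nat, (n%:R <= r) /\ walkn N n x y].

Definition csum N (u : nat) : R :=
  fine (\esum_(v in [set v | nadj N u v]) (ncond N u v)%:E).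

Definition trans N (u v : nat) : R := ncond N u v / csum N u.

Definition energy N (f : nat -> R) : \bar R :=
  \esum_(p in [set p : nat * nat | (p.1 <= p.2)%N])
     (ncond N p.1 p.2 * (f p.1 - f p.2) ^+ 2)%:E.

(* effective resistance R_eff(A <-> Z) = 1 / inf {energy f : f = 1 on A, f = 0 on Z}
   (1/+oo = 0, 1/0 = +oo) *)
Definition Reff N (A Z : set nat) : \bar R :=
  let m := ereal_inf [set energy N f | f in
              [set f : nat -> R | (forall a, A a -> f a = 1) /\
                                  (forall z, Z z -> f z = 0)]] in
  if m == +oo%E then 0%E
  else if m == 0%E then +oo%E
  else ((fine m)^-1)%:E.

(* relabelling isomorphism of doubly rooted networks (N,x,y) ~ (N',x',y'),
   ignoring the (meaningless) conductances/edge marks off edges *)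
Definition net_iso N N' (x y x' y' : nat) : Prop :=
  exists s : nat -> nat, bijective s /\
    (forall u v, nadj N' u v = nadj N (s u) (s v)) /\
    (forall u v, nadj N' u v -> ncond N' u v = ncond N (s u) (s v)) /\
    (forall u, nmarkv N' u = nmarkv N (s u)) /\
    (forall u v, nadj N' u v -> nmarke N' u v = nmarke N (s u) (s v)) /\
    s x' = x /\ s y' = y.

End Networks.

Section RandomNetworks.
Context {R : realType} {dx : measure_display} {Xi : measurableType dx}.

Definition net_cyl : set (set (net R Xi * nat * nat)) := fun A =>
  (exists u v, A = [set t | nadj t.1.1 u v]) \/
  (exists u v (B : set R), measurable B /\ A = [set t | B (ncond t.1.1 u v)]) \/
  (exists u (B : set Xi), measurable B /\ A = [set t | B (nmarkv t.1.1 u)]) \/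
  (exists u v (B : set Xi), measurable B /\ A = [set t | B (nmarke t.1.1 u v)]) \/
  (exists k, A = [set t | t.1.2 = k]) \/
  (exists k, A = [set t | t.2 = k]).

(* nonnegative measurable isomorphism-invariant functionals of doubly rooted
   networks: test functions for equality in law of (G,X0,X1,c,xi) *)
Definition test_fun (F : net R Xi * nat * nat -> \bar R) : Prop :=
  (forall t, (0 <= F t)%E) /\
  (forall B : set (\bar R), measurable B -> <<s net_cyl >> (F @^-1` B)) /\
  (forall N N' x y x' y', net_iso N N' x y x' y' -> F (N', x', y') = F (N, x, y)).

Context {d : measure_display} {Omega : measurableType d}.

Definition measurable_net (N : Omega -> net R Xi) (rho : Omega -> nat) : Prop :=
  (forall u v, measurable [set w | nadj (N w) u v]) /\
  (forall u v, measurable_fun setT (fun w => ncond (N w) u v)) /\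
  (forall u, measurable_fun setT (fun w => nmarkv (N w) u)) /\
  (forall u v, measurable_fun setT (fun w => nmarke (N w) u v)) /\
  (forall k, measurable [set w | rho w = k]).

(* reversibility: a.s. c_rho > 0, and (G,X0,X1,c,xi) =d (G,X1,X0,c,xi) *)
Definition reversible (P : probability Omega R)
    (N : Omega -> net R Xi) (rho : Omega -> nat) : Prop :=
  {ae P, forall w, 0 < csum (N w) (rho w)} /\
  forall F, test_fun F ->
    (\int[P]_w (\esum_(v in [set v | nadj (N w) (rho w) v])
                  ((trans (N w) (rho w) v)%:E * F (N w, rho w, v))))%E =
    (\int[P]_w (\esum_(v in [set v | nadj (N w) (rho w) v])
                  ((trans (N w) (rho w) v)%:E * F (N w, v, rho w))))%E.

Definition zeta_tilde (P : probability Omega R)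
    (N : Omega -> net R Xi) (rho : Omega -> nat) : \bar R :=
  ereal_sup [set z%:E | z in [set z : R | forall delta : R, 0 < delta ->
    {ae P, forall w, exists R0 : nat, forall n : nat, (R0 <= n)%N ->
      ((n%:R `^ (z - delta))%:E <=
       Reff (N w) (gball (N w) (rho w) (n%:R `^ (1 - delta)))
                  (~` gball (N w) (rho w) n%:R))%E}]].

Definition zeta_tilde0 (P : probability Omega R)
    (N : Omega -> net R Xi) (rho : Omega -> nat) : \bar R :=
  ereal_inf [set z%:E | z in [set z : R | forall delta : R, 0 < delta ->
    {ae P, forall w, exists R0 : nat, forall n : nat, (R0 <= n)%N ->
      (Reff (N w) [set rho w] (~` gball (N w) (rho w) n%:R) <=
       (n%:R `^ (z + delta))%:E)%E}]].

End RandomNetworks.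

From HB Require Import structures.
From mathcomp Require Import all_boot all_order all_algebra.
From mathcomp Require Import all_classical all_reals all_analysis measurable_realfun.
From mathcomp Require Import ring lra.
Import Order.TTheory GRing.Theory Num.Theory.
Import numFieldNormedType.Exports.
Set Implicit Arguments. Unset Strict Implicit. Unset Printing Implicit Defensive.
Local Open Scope classical_set_scope.
Local Open Scope ring_scope.

(* Everything happens pathwise.
   The lower hypothesis is the bound defining zeta_tilde0 >= zeta. A vertex y
   at distance R + 1 from rho (the graph is infinite and connected) gives
   Reff(rho <-> B(rho,R)^c) <= Reff(rho <-> y) <= (R+1)^(zeta+delta), which
   bounds zeta_tilde0 and, as enlarging the source only lowers the resistance,
   zeta_tilde. For zeta_tilde >= zeta: if Reff(a <-> Z) >= s and
   Reff(a <-> x) <= s/8 on A, then Reff(A <-> Z) >= s/8, because a near-optimal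
   unit potential g from a to Z satisfies (1 - g x)^2 <= Reff(a <-> x) energy g
   <= 1/4 on A, so clamping 2 g to [0,1] yields a unit potential from A to Z of
   energy at most 4 energy g. On A = B(rho,R^(1-delta)) the point resistances
   are at most about R^((1-delta)(zeta+eps)), negligible against R^(zeta-eps). *)

Definition clamp01 {R : realType} (t : R) : R :=
  if t <= 0 then 0 else if 1 <= t then 1 else t.

Lemma clamp01_sqr_diff_le {R : realType} (a b : R) :
  (clamp01 a - clamp01 b) ^+ 2 <= (a - b) ^+ 2.
Proof.
have clamp01_incr (x y : R) : x <= y -> 0 <= clamp01 y - clamp01 x <= y - x.
  move=> xy; rewrite /clamp01.
  by case: (lerP x 0); case: (lerP 1 x); case: (lerP y 0); case: (lerP 1 y);
    move=> *; apply/andP; split; lra.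
have [ab|ba] := lerP a b.
  by have /andP[] := clamp01_incr a b ab; nra.
by have /andP[] := clamp01_incr b a (ltW ba); nra.
Qed.

Lemma near_infty_natP (P : nat -> Prop) :
  (\forall n \near \oo, P n) <-> exists n0, forall n, (n0 <= n)%N -> P n.
Proof. by split=> [[n0 _ Pn]|[n0 Pn]]; exists n0. Qed.

Section PowerAsymptotics.
Context {R : realType}.

Lemma near_powR_ge (M c : R) : 0 < c -> \forall n \near \oo, M <= n%:R `^ c.
Proof.
move=> c_gt0; have M1_ge0 : 0 <= Num.max M 1 by rewrite le_max ler01 orbT.
near=> n; apply: le_trans (_ : Num.max M 1 <= _); first by rewrite le_max lexx.
have -> : Num.max M 1 = (Num.max M 1 `^ c^-1) `^ c.
  by rewrite -powRrM mulVf ?powRr1 ?lt0r_neq0.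
rewrite ge0_ler_powR ?nnegrE ?powR_ge0 ?ler0n ?(ltW c_gt0) //.
near: n; exact: nbhs_infty_ger.
Unshelve. all: by end_near. Qed.

Lemma near_powR_dominates (K a b : R) :
  a < b -> \forall n \near \oo, K * n%:R `^ a <= n%:R `^ b.
Proof.
rewrite -subr_gt0 => ab_gt0; near=> n.
have n_neq0 : n%:R != 0 :> R.
  by rewrite pnatr_eq0 -lt0n; near: n; exact: nbhs_infty_gt.
rewrite -[b](subrK a) powRD ?n_neq0 ?implybT // ler_wpM2r ?powR_ge0 //.
by near: n; exact: near_powR_ge.
Unshelve. all: by end_near. Qed.

Lemma near_powR_succ_le (p q : R) :
  0 <= p -> p < q -> \forall n \near \oo, n.+1%:R `^ p <= n%:R `^ q.
Proof.
move=> p_ge0 pq; near=> n.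
apply: le_trans (_ : 2 `^ p * n%:R `^ p <= _); last first.
  by near: n; exact: near_powR_dominates.
rewrite -powRM ?ler0n // ge0_ler_powR ?nnegrE ?mulr_ge0 ?ler0n //.
have : 1 <= n%:R :> R by rewrite ler1n; near: n; exact: nbhs_infty_gt.
by rewrite -natr1; lra.
Unshelve. all: by end_near. Qed.

Lemma powR_exponent_le (a b : R) :
  (\forall n \near \oo, n%:R `^ a <= n%:R `^ b) -> a <= b.
Proof.
move=> ab; rewrite leNgt; apply/negP => ba.
have [n [[le_ab dom] n_gt0]] := filter_ex
  (filterI (filterI ab (near_powR_dominates 2 ba)) (nbhs_infty_gt 0)).
have : 0 < n%:R `^ b by rewrite powR_gt0 ?ltr0n.
by move: (le_trans dom le_ab); lra.
Qed.

End PowerAsymptotics.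

Section Networks.
Context {R : realType} {Xi : Type} (N : net R Xi).
Hypothesis N_network : is_network N.

Definition unit_potential (A Z : set nat) : set (nat -> R) :=
  [set f | (forall a, A a -> f a = 1) /\ (forall z, Z z -> f z = 0)].

Definition min_energy (A Z : set nat) : \bar R :=
  ereal_inf [set energy N f | f in unit_potential A Z].

Lemma energy_ge0 f : (0 <= energy N f)%E.
Proof.
have [_ [_ [cond_ge0 _]]] := N_network.
by apply: esum_ge0 => p _; rewrite lee_fin mulr_ge0 ?sqr_ge0.
Qed.

Lemma min_energy_ge0 A Z : (0 <= min_energy A Z)%E.
Proof. by apply/ereal_infP => _ [f _ <-]; exact: energy_ge0. Qed.

Lemma Reff_inv_min_energy A Z : Reff N A Z = ((min_energy A Z)^-1)%E.
Proof.
rewrite /Reff -/(min_energy A Z).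
by case: (min_energy A Z) (min_energy_ge0 A Z) => [m| |].
Qed.

Lemma Reff_ge0 A Z : (0 <= Reff N A Z)%E.
Proof. by rewrite Reff_inv_min_energy inve_ge0 min_energy_ge0. Qed.

Lemma Reff_le_subset A Z A' Z' :
  A' `<=` A -> Z' `<=` Z -> (Reff N A Z <= Reff N A' Z')%E.
Proof.
move=> AA' ZZ'; rewrite !Reff_inv_min_energy lee_pV2 ?inE ?min_energy_ge0 //.
apply: ereal_inf_le_tmp => _ [f [fA fZ] <-]; exists f => //.
by split=> [a /AA'|z /ZZ']; [apply: fA|apply: fZ].
Qed.

Lemma Reff_ge_inv_energy A Z f (e : R) :
  unit_potential A Z f -> (energy N f <= e%:E)%E -> 0 < e ->
  ((e^-1)%:E <= Reff N A Z)%E.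
Proof.
move=> fAZ fe e_gt0.
rewrite Reff_inv_min_energy inve_pge ?inE ?min_energy_ge0 //;
  last by rewrite lee_fin invr_ge0 ltW.
rewrite inver invr_eq0 gt_eqF // invrK.
by apply: le_trans fe; apply: ereal_inf_lbound; exists f.
Qed.

Lemma exists_unit_potential_energy_lt A Z (s e : R) :
  0 < s -> (s%:E <= Reff N A Z)%E -> s^-1 < e ->
  exists2 f, unit_potential A Z f & (energy N f < e%:E)%E.
Proof.
move=> s_gt0 sR se.
suff /ereal_inf_lt[_ [f fAZ <-]] : (min_energy A Z < e%:E)%E by exists f.
have : (min_energy A Z <= (s%:E)^-1)%E.
  rewrite -inve_pge ?inE ?min_energy_ge0 ?lee_fin ?(ltW s_gt0) //.
  by rewrite -Reff_inv_min_energy.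
by rewrite inver gt_eqF // => /le_lt_trans; apply; rewrite lte_fin.
Qed.

Lemma energy_le_scale f g (c : R) : 0 <= c ->
  (forall u v, (f u - f v) ^+ 2 <= c * (g u - g v) ^+ 2) ->
  (energy N f <= c%:E * energy N g)%E.
Proof.
have [_ [_ [cond_ge0 _]]] := N_network.
move=> c_ge0 fg; apply: ge_ereal_sup => _ [E [finE E_edges] <-].
rewrite fsumEFin //; apply: (@le_trans _ _ (c%:E * (\sum_(p \in E)
    (ncond N p.1 p.2 * (g p.1 - g p.2) ^+ 2))%:E)%E).
  rewrite -EFinM lee_fin mulr_fsumr !fsbig_finite //; apply: ler_sum => p _.
  by rewrite [X in _ <= X]mulrCA ler_wpM2l.
rewrite lee_wpmul2l ?lee_fin // -fsumEFin //.
by apply: ereal_sup_ubound; exists E.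
Qed.

(* Rescaling h to the unit potential (h - h x) / (h a - h x) shows
   Reff(a <-> x) >= (h a - h x)^2 / energy h. *)
Lemma sqr_potential_diff_le a x h (r e : R) :
  (Reff N [set a] [set x] <= r%:E)%E -> (energy N h <= e%:E)%E -> 0 < e ->
  (h a - h x) ^+ 2 <= r * e.
Proof.
move=> Rr he e_gt0.
have r_ge0 : 0 <= r by rewrite -lee_fin (le_trans (Reff_ge0 _ _) Rr).
set d := h a - h x.
have [->|d_neq0] := eqVneq d 0; first by rewrite expr0n /= mulr_ge0 // ltW.
have d2_gt0 : 0 < d ^+ 2 by rewrite exprn_even_gt0.
pose f u := (h u - h x) / d.
have f_unit : unit_potential [set a] [set x] f.
  by split=> [_ ->|_ ->]; rewrite /f ?divff // subrr mul0r.
have Ef : (energy N f <= ((d ^+ 2)^-1 * e)%:E)%E.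
  have fh u v : (f u - f v) ^+ 2 <= (d ^+ 2)^-1 * (h u - h v) ^+ 2.
    by rewrite [leLHS](_ : _ = (d ^+ 2)^-1 * (h u - h v) ^+ 2) // /f; field.
  have d2V_ge0 : 0 <= (d ^+ 2)^-1 by rewrite invr_ge0 ltW.
  rewrite EFinM; apply: le_trans (energy_le_scale d2V_ge0 fh) _.
  by rewrite lee_wpmul2l ?lee_fin.
have Ef_gt0 : 0 < d ^- 2 * e by rewrite mulr_gt0 ?invr_gt0.
have := Reff_ge_inv_energy f_unit Ef Ef_gt0.
rewrite invfM invrK => /le_trans /(_ Rr).
by rewrite lee_fin ler_pdivrMr.
Qed.

Lemma Reff_set_ge a A Z (r s : R) :
  0 < s -> 8 * r <= s -> (s%:E <= Reff N [set a] Z)%E ->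
  (forall x, A x -> (Reff N [set a] [set x] <= r%:E)%E) ->
  ((s / 8)%:E <= Reff N A Z)%E.
Proof.
move=> s_gt0 rs sR Ar.
have [g [ga gZ] Eg] :
    exists2 g, unit_potential [set a] Z g & (energy N g < (2 / s)%:E)%E.
  apply: (exists_unit_potential_energy_lt s_gt0 sR).
  by rewrite -[X in X < _]mul1r ltr_pM2r ?invr_gt0 // ltr1n.
have gA x : A x -> 1 / 2 <= g x.
  have s2_gt0 : 0 < 2 / s by rewrite divr_gt0.
  move=> Ax; have := sqr_potential_diff_le (Ar x Ax) (ltW Eg) s2_gt0.
  have : r * (2 / s) <= 1 / 4 by rewrite mulrA ler_pdivrMr //; lra.
  by rewrite ga //; nra.
pose f u := clamp01 (2 * g u).
have f_unit : unit_potential A Z f.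
  split=> [x /gA gx|z Zz]; rewrite /f /clamp01; last by rewrite gZ // mulr0 lexx.
  by rewrite ifF ?ifT //; [lra|apply/negbTE; rewrite -ltNge; lra].
have fg u v : (f u - f v) ^+ 2 <= 4 * (g u - g v) ^+ 2.
  apply: le_trans (clamp01_sqr_diff_le _ _) _.
  by rewrite -mulrBr exprMn; nra.
have Ef : (energy N f <= (8 / s)%:E)%E.
  apply: le_trans (energy_le_scale _ fg) _ => //.
  apply: le_trans (lee_wpmul2l _ (ltW Eg)) _; first by rewrite lee_fin.
  by rewrite -EFinM lee_fin; lra.
by rewrite -[s / 8]invf_div (Reff_ge_inv_energy f_unit Ef) // divr_gt0.
Qed.

Lemma walkn_finite k x : finite_set [set y | walkn N k x y].
Proof.
have [_ [_ [_ [_ [adj_finite _]]]]] := N_network.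
elim: k => [|k IH] /=.
  by apply: sub_finite_set (finite_set1 x) => y /= ->.
apply: (@sub_finite_set _ _
  (\bigcup_(z in [set z | walkn N k x z]) [set y | nadj N z y])).
  by move=> y [z [wz zy]]; exists z.
exact: bigcup_finite.
Qed.

Lemma gball_finite x n : finite_set (gball N x n%:R).
Proof.
apply: (@sub_finite_set _ _ (\bigcup_(k in `I_n.+1) [set y | walkn N k x y])).
  by move=> y [k [kn wk]]; exists k => //=; rewrite ltnS -(ler_nat R).
by apply: bigcup_finite => [|k _]; [exact: finite_II|exact: walkn_finite].
Qed.

Lemma gball_center x (r : R) : 0 <= r -> gball N x r x.
Proof. by exists 0%N. Qed.

(* A finite ball in the infinite connected graph is left by some path from
   its center; the first vertex outside it lies at distance n + 1. *)
Lemma exists_gball_boundary x n :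
  exists y, ~ gball N x n%:R y /\ gball N x n.+1%:R y.
Proof.
have [_ [_ [_ [_ [_ connected]]]]] := N_network.
have [y y_out] : exists y, ~ gball N x n%:R y.
  apply: contrapT => all_in; apply: infinite_nat.
  apply: sub_finite_set (gball_finite x n) => y _.
  by apply: contrapT => y_out; apply: all_in; exists y.
have [m] := connected x y.
elim: m y y_out => [|m IH] y y_out /=.
  by move=> xy; case: y_out; rewrite -xy; exact: gball_center.
move=> [z [wz zy]].
have [[k [kn wk]]|z_out] := pselect (gball N x n%:R z); last exact: IH z_out wz.
exists y; split=> //; exists k.+1; split; last by exists z.
by rewrite -natr1 -addn1 natrD lerD2r.
Qed.

Lemma Reff_compl_gball_le a (p q : R) : 0 <= p -> p < q ->
  (\forall n \near \oo, forall x, gball N a n%:R x ->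
     (Reff N [set a] [set x] <= (n%:R `^ p)%:E)%E) ->
  \forall n \near \oo, (Reff N [set a] (~` gball N a n%:R) <= (n%:R `^ q)%:E)%E.
Proof.
move=> p_ge0 pq /near_infty_natP[n0 point_le]; near=> n.
have [y [y_out y_in]] := exists_gball_boundary a n.
apply: le_trans (Reff_le_subset (A' := [set a]) (Z' := [set y]) _ _) _ => //.
  by move=> _ ->.
apply: le_trans (point_le n.+1 _ y y_in) _.
  by apply: leqW; near: n; exact: nbhs_infty_ge.
by rewrite lee_fin; near: n; exact: near_powR_succ_le.
Unshelve. all: by end_near. Qed.

(* On the ball of radius n^t, Reff(a <-> x) <= n^(t p) + n0^p, where n0 is the
   threshold of the hypothesis; then apply Reff_set_ge with s = n^q. *)
Lemma Reff_gball_compl_ge a (t p q q' : R) :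
  0 <= p -> 0 < q -> t * p < q -> q' < q ->
  (\forall n \near \oo,
     (forall x, gball N a n%:R x -> (Reff N [set a] [set x] <= (n%:R `^ p)%:E)%E) /\
     ((n%:R `^ q)%:E <= Reff N [set a] (~` gball N a n%:R))%E) ->
  \forall n \near \oo,
    ((n%:R `^ q')%:E <= Reff N (gball N a (n%:R `^ t)) (~` gball N a n%:R))%E.
Proof.
move=> p_ge0 q_gt0 tpq q'q /near_infty_natP[n0 bounds].
pose C := n0%:R `^ p.
have point_le n x : gball N a (n%:R `^ t) x ->
    (Reff N [set a] [set x] <= (n%:R `^ (t * p) + C)%:E)%E.
  move=> [k [kn wk]].
  have x_in : gball N a (maxn k n0)%:R x by exists k; rewrite ler_nat leq_maxl.
  apply: le_trans ((bounds _ (leq_maxr k n0)).1 x x_in) _.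
  have k_le : k%:R `^ p <= n%:R `^ (t * p).
    by rewrite powRrM ge0_ler_powR ?nnegrE ?ler0n ?powR_ge0.
  have := powR_ge0 n0%:R p; have := powR_ge0 n%:R (t * p).
  by rewrite lee_fin /maxn /C; case: ltnP; lra.
near=> n.
have n_large : (n0 <= n)%N by near: n; exact: nbhs_infty_ge.
have n_q_gt0 : 0 < n%:R `^ q.
  by rewrite powR_gt0 // ltr0n; near: n; exact: nbhs_infty_gt.
apply: le_trans (Reff_set_ge n_q_gt0 _ (bounds n n_large).2 (point_le n)).
- have : 8 * n%:R `^ q' <= n%:R `^ q by near: n; exact: near_powR_dominates.
  by rewrite lee_fin; lra.
- have : 16 * n%:R `^ (t * p) <= n%:R `^ q by near: n; exact: near_powR_dominates.
  have : 16 * C <= n%:R `^ q by near: n; exact: near_powR_ge.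
  lra.
Unshelve. all: by end_near. Qed.

End Networks.

Section ResistanceExponents.
Context {R : realType} {d : measure_display} {Omega : measurableType d}.
Context (P : probability Omega R).

Lemma ae_near_powR_exponent_le (X : Omega -> nat -> \bar R) (a b : R) :
  {ae P, forall w, \forall n \near \oo, ((n%:R `^ a)%:E <= X w n)%E} ->
  {ae P, forall w, \forall n \near \oo, (X w n <= (n%:R `^ b)%:E)%E} -> a <= b.
Proof.
move=> lower upper.
have P_gt0 : (0 < P setT)%E by rewrite probability_setT lte01.
have P_proper := ae_properfilter_algebraOfSetsType P_gt0.
have [w [lower_w upper_w]] := filter_ex (filterI lower upper).
apply: powR_exponent_le; apply: filterS (filterI lower_w upper_w) => n [l u].
by rewrite -lee_fin (le_trans l u).
Qed.

Context {dx : measure_display} {Xi : measurableType dx}.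
Context (N : Omega -> net R Xi) (rho : Omega -> nat).

Lemma zeta_tilde0_le (z : R) :
  (forall delta, 0 < delta -> {ae P, forall w, \forall n \near \oo,
     (Reff (N w) [set rho w] (~` gball (N w) (rho w) n%:R)
        <= (n%:R `^ (z + delta))%:E)%E}) ->
  (zeta_tilde0 P N rho <= z%:E)%E.
Proof.
move=> upper; apply: ereal_inf_lbound; exists z => // delta /upper.
by apply: filterS => w /near_infty_natP.
Qed.

Lemma zeta_tilde0_ge (z : R) :
  (forall delta, 0 < delta -> {ae P, forall w, \forall n \near \oo,
     ((n%:R `^ (z - delta))%:E
        <= Reff (N w) [set rho w] (~` gball (N w) (rho w) n%:R))%E}) ->
  (z%:E <= zeta_tilde0 P N rho)%E.
Proof.
move=> lower; apply/ereal_infP => _ [z' upper <-]; rewrite lee_fin.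
apply/ler_addgt0Pr => e e_gt0; have e2_gt0 : 0 < e / 2 by rewrite divr_gt0.
have /(filterS (fun w => proj2 (near_infty_natP _))) upper' := upper _ e2_gt0.
have := ae_near_powR_exponent_le (lower _ e2_gt0) upper'.
lra.
Qed.

Lemma zeta_tilde_ge (z : R) :
  (forall delta, 0 < delta -> {ae P, forall w, \forall n \near \oo,
     ((n%:R `^ (z - delta))%:E <= Reff (N w)
        (gball (N w) (rho w) (n%:R `^ (1 - delta)))
        (~` gball (N w) (rho w) n%:R))%E}) ->
  (z%:E <= zeta_tilde P N rho)%E.
Proof.
move=> lower; apply: ereal_sup_ubound; exists z => // delta /lower.
by apply: filterS => w /near_infty_natP.
Qed.

Lemma zeta_tilde_le (z : R) : (forall w, is_network (N w)) ->
  (forall delta, 0 < delta -> {ae P, forall w, \forall n \near \oo,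
     (Reff (N w) [set rho w] (~` gball (N w) (rho w) n%:R)
        <= (n%:R `^ (z + delta))%:E)%E}) ->
  (zeta_tilde P N rho <= z%:E)%E.
Proof.
move=> networks upper; apply: ge_ereal_sup => _ [z' lower <-]; rewrite lee_fin.
apply/ler_addgt0Pr => e e_gt0; have e2_gt0 : 0 < e / 2 by rewrite divr_gt0.
have /(filterS (fun w => proj2 (near_infty_natP _))) lower' := lower _ e2_gt0.
have upper' : {ae P, forall w, \forall n \near \oo,
    (Reff (N w) (gball (N w) (rho w) (n%:R `^ (1 - e / 2)))
       (~` gball (N w) (rho w) n%:R) <= (n%:R `^ (z + e / 2))%:E)%E}.
  apply: filterS (upper _ e2_gt0) => w; apply: filterS => n; apply: le_trans.
  by apply: Reff_le_subset => // _ ->; apply/gball_center/powR_ge0.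
have := ae_near_powR_exponent_le lower' upper'.
lra.
Qed.

End ResistanceExponents.

Lemma exists_exponent_margin {R : realType} (zeta delta : R) :
  0 < zeta -> 0 < delta -> exists2 eps, 0 < eps &
    [/\ 0 < zeta - eps, (1 - delta) * (zeta + eps) < zeta - eps
      & zeta - delta < zeta - eps].
Proof.
move=> zeta_gt0 delta_gt0.
pose eps := Num.min (Num.min (delta / 2) (zeta / 2)) (delta * zeta / 4).
have eps_gt0 : 0 < eps by rewrite !lt_min !divr_gt0 ?mulr_gt0.
exists eps => //.
have eps_le1 : eps <= delta / 2 by rewrite !ge_min lexx.
have eps_le2 : eps <= zeta / 2 by rewrite !ge_min lexx orbT.
have eps_le3 : eps <= delta * zeta / 4 by rewrite ge_min lexx orbT.
have := mulr_gt0 delta_gt0 eps_gt0; have := mulr_gt0 delta_gt0 zeta_gt0.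
by split; nra.
Qed.

Theorem theorem4p7 (R : realType) (d : measure_display) (Omega : measurableType d)
  (P : probability Omega R) (dx : measure_display) (Xi : measurableType dx)
  (N : Omega -> net R Xi) (rho : Omega -> nat) (zeta : R) :
  (forall w, is_network (N w)) ->
  measurable_net N rho ->
  reversible P N rho ->
  0 < zeta ->
  (forall delta : R, 0 < delta ->
    {ae P, forall w, exists R0 : nat, forall n : nat, (R0 <= n)%N ->
      (forall x, gball (N w) (rho w) n%:R x ->
         (Reff (N w) [set rho w] [set x] <= (n%:R `^ (zeta + delta))%:E)%E) /\
      ((n%:R `^ (zeta - delta))%:E <=
         Reff (N w) [set rho w] (~` gball (N w) (rho w) n%:R))%E}) ->
  zeta_tilde P N rho = zeta%:E /\ zeta_tilde0 P N rho = zeta%:E.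
Proof.
move=> networks _ _ zeta_gt0 bounds.
have upper delta : 0 < delta -> {ae P, forall w, \forall n \near \oo,
    (Reff (N w) [set rho w] (~` gball (N w) (rho w) n%:R)
       <= (n%:R `^ (zeta + delta))%:E)%E}.
  move=> delta_gt0; have /bounds : 0 < delta / 2 by rewrite divr_gt0.
  apply: filterS => w /near_infty_natP /(filterS (fun n => @proj1 _ _)).
  by apply: Reff_compl_gball_le => //; lra.
split; apply/eqP; rewrite eq_le; apply/andP; split.
- exact: zeta_tilde_le.
- apply: zeta_tilde_ge => delta delta_gt0.
  have [eps eps_gt0 [q_gt0 tpq q'q]] := exists_exponent_margin zeta_gt0 delta_gt0.
  apply: filterS (bounds eps eps_gt0) => w /near_infty_natP.
  by apply: Reff_gball_compl_ge => //; lra.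
- exact: zeta_tilde0_le.
- apply: zeta_tilde0_ge => delta /bounds; apply: filterS => w /near_infty_natP.
  by apply: filterS => n [].
Qed.
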